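(* If $r\ge 2$ and $t\ge 1$, then $6\le \mathrm{gp}(P_r\boxtimes C_{2t+1})\le 7$. Moreover, if $t\in\{1,2\}$ or $r=2$, then $\mathrm{gp}(P_r\boxtimes C_{2t+1})=6$.
   Context: All graphs are finite and simple; $P_r$ is the path on $r$ vertices and $C_m$ the cycle on $m$ vertices. The strong product $G\boxtimes H$ has vertex set $V(G)\times V(H)$, with distinct $(g,h),(g',h')$ adjacent iff ($g=g'$ or $gg'\in E(G)$) and ($h=h'$ or $hh'\in E(H)$). For a connected graph $G$, a set $S\subseteq V(G)$ is a general position set if no three pairwise distinct vertices of $S$ lie on a common geodesic (shortest path); $\mathrm{gp}(G)$ is the maximum cardinality of a general position set. *)

From Stdlib Require Import ClassicalDescription.
From mathcomp Require Import all_boot.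
Set Implicit Arguments. Unset Strict Implicit. Unset Printing Implicit Defensive.

Definition pb (P : Prop) : bool :=
  if excluded_middle_informative P then true else false.

Definition path_rel (r : nat) : rel 'I_r :=
  fun i j => (i.+1 == j :> nat) || (j.+1 == i :> nat).

(* Cycle C_m on vertices {0,...,m-1} (used with m >= 3). *)
Definition cycle_rel (m : nat) : rel 'I_m :=
  fun i j => (i != j) && ((i.+1 %% m == j :> nat) || (j.+1 %% m == i :> nat)).

Definition strong_rel (T1 T2 : finType) (e1 : rel T1) (e2 : rel T2)
  : rel (T1 * T2) :=
  fun x y => [&& x != y, (x.1 == y.1) || e1 x.1 y.1
                       & (x.2 == y.2) || e2 x.2 y.2].

Definition geodesic (T : finType) (e : rel T) (x : T) (p : seq T) : Prop :=
  path e x p /\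
  forall q : seq T, path e x q -> last x q = last x p -> size p <= size q.

Definition gp_set (T : finType) (e : rel T) (S : {set T}) : Prop :=
  ~ exists (x : T) (p : seq T) (u v w : T),
      [/\ geodesic e x p,
          [/\ u \in S, v \in S & w \in S],
          [/\ u != v, v != w & u != w] &
          [/\ u \in x :: p, v \in x :: p & w \in x :: p]].

Definition gp (T : finType) (e : rel T) : nat :=
  \max_(S : {set T} | pb (gp_set e S)) #|S|.

From mathcomp Require Import all_boot zify.
From Stdlib Require Import ClassicalDescription.

(* The distance of P_r ⊠ C_n is the maximum of the path and cycle distances, and
   a set is in general position iff the triangle inequality is strict on each of
   its triples of distinct points.  For n = 2t+1, cover the cycle by its n windows
   of t+1 consecutive columns.  Inside a window the cycle distance is a path
   distance, and in the rotated coordinates x1 + x2 and x1 - x2 the L∞ distance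
   becomes additive along any triple that is monotone in both coordinates; an
   Erdős–Szekeres labelling then allows at most 4 points of a general position
   set per window, and at most 2 per window inside one row.  Every column lies in
   t+1 windows, so (t+1)|S| <= 4(2t+1), i.e. |S| <= 7, and |S| <= 6 when t <= 2;
   row by row (t+1)|S ∩ row| <= 2(2t+1) gives 3 points per row, hence 6 when
   r = 2.  The six points {0,1} × {0, t, t+1} are at distance 1 within the column
   classes {0} and {t, t+1} and at distance t across them, so they are in general
   position. *)

Set Implicit Arguments. Unset Strict Implicit. Unset Printing Implicit Defensive.

Definition distn (m n : nat) := (m - n) + (n - m).

Definition between (a b c : nat) := (a <= b <= c) || (c <= b <= a).

Lemma distn_between a b c : between a b c -> distn a b + distn b c = distn a c.
Proof. rewrite /between /distn; lia. Qed.

(* The hypotheses under which [d] is the shortest-path distance of [e]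
   (see [geodesicE]). *)
Definition graph_metric (T : finType) (e : rel T) (d : T -> T -> nat) : Prop :=
  [/\ forall x y, (d x y == 0) = (x == y),
      forall x y, d x y = d y x,
      forall x y z, d x z <= d x y + d y z,
      forall x y, e x y -> d x y <= 1
    & forall x y, 0 < d x y -> exists2 z, e x z & d z y = (d x y).-1].

Section GraphMetric.
Variables (T : finType) (e : rel T) (d : T -> T -> nat).
Hypothesis d_metric : graph_metric e d.

Let d_eq0 : forall x y, (d x y == 0) = (x == y). Proof. by case: d_metric. Qed.
Let d_sym : forall x y, d x y = d y x. Proof. by case: d_metric. Qed.
Let d_tri : forall x y z, d x z <= d x y + d y z. Proof. by case: d_metric. Qed.
Let d_edge : forall x y, e x y -> d x y <= 1. Proof. by case: d_metric. Qed.
Let d_step : forall x y, 0 < d x y -> exists2 z, e x z & d z y = (d x y).-1.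
Proof. by case: d_metric. Qed.

Lemma graph_metric_dd x : d x x = 0.
Proof. by apply/eqP; rewrite d_eq0. Qed.

Lemma graph_metric_step_or_stay x y :
  exists2 z, (x == z) || e x z & d z y = (d x y).-1.
Proof.
case: (posnP (d x y)) => [/eqP|/d_step[z xz <-]]; last by exists z; rewrite ?xz ?orbT.
by rewrite d_eq0 => /eqP->; exists y; rewrite ?eqxx ?graph_metric_dd.
Qed.

Lemma dist_nth_le x p i k : path e x p -> i <= k <= size p ->
  d (nth x (x :: p) i) (nth x (x :: p) k) <= k - i.
Proof.
move=> /(pathP x) ep; elim: k => [|k IHk] /andP[ik ks].
  by move: ik; rewrite leqn0 => /eqP->; rewrite graph_metric_dd.
case: (eqVneq i k.+1) => [-> | ne]; first by rewrite graph_metric_dd.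
apply: leq_trans (d_tri _ (nth x (x :: p) k) _) _.
have := d_edge (ep k ks); rewrite -[nth x p k]/(nth x (x :: p) k.+1).
have := IHk ltac:(lia); lia.
Qed.

Lemma dist_last_le x p : path e x p -> d x (last x p) <= size p.
Proof.
move=> ep; have := dist_nth_le (i := 0) (k := size p) ep; rewrite subn0 leqnn => /(_ isT).
by rewrite -[nth x _ (size p)]/(nth x (x :: p) (size (x :: p)).-1) nth_last.
Qed.

Lemma exists_walk x y : exists p, [/\ path e x p, last x p = y & size p = d x y].
Proof.
move: {2}(d x y) (erefl (d x y)) => k; elim: k x => [|k IHk] x dxy.
  by exists [::]; split=> //; apply/eqP; rewrite -d_eq0 dxy.
have [z exz dzy] := d_step (ltac:(lia) : 0 < d x y).
have [p [zp zpy size_p]] := IHk z ltac:(lia).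
by exists (z :: p); rewrite /= exz zp size_p dzy dxy.
Qed.

Lemma geodesicE x p : geodesic e x p <-> path e x p /\ size p = d x (last x p).
Proof.
split=> [[ep p_min] | [ep size_p]]; last first.
  by split=> // q eq q_last; rewrite size_p -q_last dist_last_le.
split=> //; apply/eqP; rewrite eqn_leq dist_last_le // andbT.
by have [q [eq q_last <-]] := exists_walk x (last x p); apply: p_min.
Qed.

Lemma geodesic_dist x p a b : geodesic e x p -> a \in x :: p -> b \in x :: p ->
  d a b = distn (index a (x :: p)) (index b (x :: p)).
Proof.
move=> /geodesicE[ep size_p].
have idx_le c : c \in x :: p -> index c (x :: p) <= size p.
  by move=> cp; have := index_mem c (x :: p); rewrite cp ltnS.
have dist_head c : c \in x :: p -> d x c = index c (x :: p).
  move=> cp; have c_le := idx_le c cp.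
  have := dist_nth_le (i := 0) (k := index c (x :: p)) ep.
  have := dist_nth_le (i := index c (x :: p)) (k := size p) ep.
  rewrite c_le leqnn !nth_index // subn0.
  rewrite -[nth x _ (size p)]/(nth x (x :: p) (size (x :: p)).-1) nth_last.
  move=> /(_ isT) dc_last /(_ isT) dxc; rewrite [nth x _ 0]/= in dxc.
  rewrite [last x (x :: p)]/= in dc_last.
  by have := d_tri x c (last x p); lia.
wlog ab : a b / index a (x :: p) <= index b (x :: p).
  by move=> hw ap bp; case: (leqP (index a (x :: p)) (index b (x :: p))) => ?;
    [| rewrite d_sym]; rewrite hw //; rewrite /distn; lia.
move=> ap bp; have := dist_nth_le (i := index a (x :: p)) (k := index b (x :: p)) ep.
rewrite !nth_index // ab idx_le // => /(_ isT).
by have := d_tri x a b; rewrite !dist_head // /distn; lia.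
Qed.

Lemma gp_setP (S : {set T}) : gp_set e S <->
  (forall a b c, a \in S -> b \in S -> c \in S -> a != b -> b != c -> a != c ->
     d a c < d a b + d b c).
Proof.
split=> [gpS a b c aS bS cS ab bc ac | d_strict [x [p [u [v [w [xp]]]]]]].
  rewrite ltnNge; apply/negP=> d_add; apply: gpS.
  have [p1 [ap1 p1_last size_p1]] := exists_walk a b.
  have [p2 [bp2 p2_last size_p2]] := exists_walk b c.
  exists a, (p1 ++ p2), a, b, c; split=> //.
  - apply/geodesicE; rewrite cat_path ap1 p1_last bp2 last_cat p1_last p2_last.
    by split=> //; apply/eqP; rewrite size_cat size_p1 size_p2 eqn_leq d_add d_tri.
  - split; first exact: mem_head.
      by rewrite -cat_cons mem_cat -p1_last mem_last.
    have <- : last a (p1 ++ p2) = c by rewrite last_cat p1_last p2_last.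
    exact: mem_last.
move=> [uS vS wS] [uv vw uw] [up vp wp].
have idx_neq y z : y \in x :: p -> z \in x :: p -> y != z -> index y (x :: p) != index z (x :: p).
  by move=> yp zp; apply: contra => /eqP idx_eq; rewrite -(nth_index x yp) idx_eq nth_index.
have := d_strict u v w uS vS wS uv vw uw.
have := d_strict v u w vS uS wS ltac:(by rewrite eq_sym) uw vw.
have := d_strict u w v uS wS vS uw ltac:(by rewrite eq_sym) uv.
rewrite !(geodesic_dist xp) // /distn.
by have := idx_neq u v up vp uv; have := idx_neq v w vp wp vw; have := idx_neq u w up wp uw; lia.
Qed.

End GraphMetric.

Definition strong_dist (T1 T2 : Type) (d1 : T1 -> T1 -> nat) (d2 : T2 -> T2 -> nat)
    (x y : T1 * T2) := maxn (d1 x.1 y.1) (d2 x.2 y.2).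

Lemma strong_graph_metric (T1 T2 : finType) (e1 : rel T1) (e2 : rel T2) d1 d2 :
  graph_metric e1 d1 -> graph_metric e2 d2 ->
  graph_metric (strong_rel e1 e2) (strong_dist d1 d2).
Proof.
move=> d1_metric d2_metric.
case: (d1_metric) => [d1_eq0 d1_sym d1_tri d1_edge _].
case: (d2_metric) => [d2_eq0 d2_sym d2_tri d2_edge _].
rewrite /strong_dist; split=> [x y|x y|x y z|x y|x y d_gt0].
- by rewrite -pair_eqE /= -d1_eq0 -d2_eq0; lia.
- by rewrite d1_sym d2_sym.
- by have := d1_tri x.1 y.1 z.1; have := d2_tri x.2 y.2 z.2; lia.
- case/and3P=> _ /orP[/eqP<- | /d1_edge e1xy] /orP[/eqP<- | /d2_edge e2xy];
    rewrite ?(graph_metric_dd d1_metric) ?(graph_metric_dd d2_metric); lia.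
- have [z1 e1xz dz1] := graph_metric_step_or_stay d1_metric x.1 y.1.
  have [z2 e2xz dz2] := graph_metric_step_or_stay d2_metric x.2 y.2.
  have dz : maxn (d1 z1 y.1) (d2 z2 y.2) = (maxn (d1 x.1 y.1) (d2 x.2 y.2)).-1.
    by rewrite dz1 dz2; lia.
  exists (z1, z2) => //; apply/and3P; split => //.
  apply/eqP=> exz; move: dz d_gt0.
  have -> : z1 = x.1 by rewrite exz.
  have -> : z2 = x.2 by rewrite exz.
  lia.
Qed.

Lemma path_graph_metric n : graph_metric (@path_rel n) (fun i j => distn i j).
Proof.
rewrite /distn; split=> [i j|i j|i j k|i j|i j d_gt0].
- by apply/eqP/eqP => [?|->]; [apply: ord_inj; lia | lia].
- lia.
- lia.
- by rewrite /path_rel => /orP[] /eqP; lia.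
- have zn : (if i < j then i.+1 else i.-1) < n.
    by have := ltn_ord i; have := ltn_ord j; case: ifP; lia.
  exists (Ordinal zn); rewrite /path_rel /=; case: ifP; lia.
Qed.

Definition cycle_dist n (i j : 'I_n) := minn (distn i j) (n - distn i j).

Lemma nat_of_ordS n (i : 'I_n) : ordS i = (if i.+1 == n then 0 else i.+1) :> nat.
Proof.
rewrite /=; case: eqP => [->|]; first by rewrite modnn.
by have := ltn_ord i; move=> ? ?; rewrite modn_small //; lia.
Qed.

Lemma nat_of_ord_pred n (i : 'I_n) :
  ord_pred i = (if i == 0 :> nat then n.-1 else i.-1) :> nat.
Proof.
have := ltn_ord i; rewrite /=; case: eqP => [-> n_gt0|i_neq0 i_lt_n].
  by rewrite add0n modn_small // prednK.
by rewrite -subn1 -addnBAC; [rewrite modnDr modn_small; lia | lia].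
Qed.

Lemma cycle_relE n (i j : 'I_n) :
  cycle_rel i j = (i != j) && ((ordS i == j :> nat) || (ordS j == i :> nat)).
Proof. by []. Qed.

Lemma cycle_dist_step n (i j : 'I_n) : 0 < cycle_dist i j ->
  exists2 z, cycle_rel i z & cycle_dist z j = (cycle_dist i j).-1.
Proof.
move=> d_gt0; pose forward_arc := if i <= j then j - i else j + n - i.
pose z := if forward_arc <= n - forward_arc then ordS i else ord_pred i.
have dz : cycle_dist z j = (cycle_dist i j).-1.
  move: d_gt0; rewrite /z /forward_arc /cycle_dist /distn; have := ltn_ord i; have := ltn_ord j.
  by case: ifP; rewrite ?nat_of_ordS ?nat_of_ord_pred; repeat case: ifP; lia.
exists z => //; rewrite cycle_relE; apply/andP; split.
  by apply/eqP=> iz; move: dz d_gt0; rewrite -iz; lia.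
by rewrite /z; case: ifP => _; rewrite ?ord_predK eqxx ?orbT.
Qed.

Lemma cycle_graph_metric n : graph_metric (@cycle_rel n) (@cycle_dist n).
Proof.
split=> [i j|i j|i j k|i j|]; last exact: cycle_dist_step.
all: rewrite /cycle_dist /distn; have := ltn_ord i; have := ltn_ord j.
- by move=> ? ?; apply/eqP/eqP => [?|->]; [apply: ord_inj; lia | lia].
- lia.
- by have := ltn_ord k; lia.
- rewrite cycle_relE !nat_of_ordS.
  by move=> ? ? /andP[_ /orP[]]; case: ifP => ? /eqP; lia.
Qed.

Section BetweenFree.
Variable T : finType.

Lemma card_between_free1 (X : {set T}) (u : T -> nat) : {in X &, injective u} ->
  (forall a b c, a \in X -> b \in X -> c \in X -> a != b -> b != c -> a != c ->
     ~~ between (u a) (u b) (u c)) -> #|X| <= 2.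
Proof.
move=> u_inj u_free.
pose above_some x := [exists w in X, u w < u x].
have neq_of_lt a b : u a < u b -> a != b by apply: contraTneq => ->; rewrite ltnn.
suff /card_in_imset <- : {in X &, injective above_some}.
  by apply: leq_trans (max_card _) _; rewrite card_bool.
have lt_above x y : x \in X -> y \in X -> u x < u y -> above_some x != above_some y.
  move=> xX yX xy; have -> : above_some y by apply/existsP; exists x; rewrite xX xy.
  have -> // : above_some x = false.
  apply/negbTE/existsP => -[w /andP[wX wx]].
  have := u_free w x y wX xX yX (neq_of_lt _ _ wx) (neq_of_lt _ _ xy)
    (neq_of_lt _ _ (ltn_trans wx xy)).
  by rewrite /between (ltnW wx) (ltnW xy).
move=> x y xX yX same; apply: u_inj => //.
case: (ltngtP (u x) (u y)) => // xy; first by case/eqP: (lt_above x y xX yX xy).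
by case/eqP: (lt_above y x yX xX xy).
Qed.

Definition before (u : T -> nat) x y :=
  (u x < u y) || ((u x == u y) && (enum_rank x < enum_rank y)).

Lemma card_between_free2 (X : {set T}) (u v : T -> nat) :
  (forall a b c, a \in X -> b \in X -> c \in X -> a != b -> b != c -> a != c ->
     ~~ (between (u a) (u b) (u c) && between (v a) (v b) (v c))) -> #|X| <= 4.
Proof.
move=> uv_free.
have before_trans x y z : before u x y -> before u y z -> before u x z by rewrite /before; lia.
have before_neq x y : before u x y -> x != y by apply: contraTneq => ->; rewrite /before; lia.
have before_total x y : x != y -> before u x y || before u y x.
  move=> xy; have : (enum_rank x : nat) != enum_rank y by rewrite val_eqE (inj_eq enum_rank_inj).
  by rewrite /before; lia.
(* Label each point by whether some earlier point lies weakly below it, resp.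
   weakly above it, in v: two points with the same label would complete a
   triple that is between in both u and v. *)
pose label x := ([exists w in X, before u w x && (v w <= v x)],
                 [exists w in X, before u w x && (v x <= v w)]).
suff /card_in_imset <- : {in X &, injective label}.
  by apply: leq_trans (max_card _) _; rewrite card_prod card_bool.
have before_label x y : x \in X -> y \in X -> before u x y -> label x != label y.
  move=> xX yX xy.
  have no_mid w : w \in X -> before u w x -> ~~ between (v w) (v x) (v y).
    move=> wX wx; have wy := before_trans _ _ _ wx xy.
    have := uv_free w x y wX xX yX (before_neq _ _ wx) (before_neq _ _ xy) (before_neq _ _ wy).
    have uwxy : between (u w) (u x) (u y) by move: wx xy; rewrite /before /between; lia.
    by rewrite uwxy.
  apply/eqP => same; case: (leqP (v x) (v y)) => vxy.
    have : (label y).1 by apply/existsP; exists x; rewrite xX xy vxy.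
    rewrite -same => /existsP[w /and3P[wX wx vwx]].
    by move: (no_mid w wX wx); rewrite /between vwx vxy.
  have : (label y).2 by apply/existsP; exists x; rewrite xX xy ltnW.
  rewrite -same => /existsP[w /and3P[wX wx vxw]].
  by move: (no_mid w wX wx); rewrite /between vxw (ltnW vxy) orbT.
move=> x y xX yX same; apply/eqP; apply: contraT => xy.
by case/orP: (before_total x y xy) => [/(before_label x y xX yX) | /(before_label y x yX xX)];
  rewrite same eqxx.
Qed.

End BetweenFree.

(* The position of column j in the window of C_n that starts at column k,
   i.e. (j - k) mod n for j, k < n. *)
Definition offset n k j := if k <= j then j - k else j + n - k.

Section Offset.
Variable n : nat.

Lemma offset_lt k j : k < n -> j < n -> offset n k j < n.
Proof. by rewrite /offset => ? ?; case: (leqP k j); lia. Qed.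

Lemma offsetK k j : k < n -> j < n -> offset n (offset n k j) j = k.
Proof. by rewrite /offset => ? ?; case: (leqP k j) => ?; case: leqP; lia. Qed.

Lemma offset_inj k a b : k < n -> a < n -> b < n -> offset n k a = offset n k b -> a = b.
Proof. by rewrite /offset => ? ? ?; case: (leqP k a); case: (leqP k b); lia. Qed.

Lemma cycle_dist_offset t (k a b : 'I_n) : 2 * t <= n ->
  offset n k a <= t -> offset n k b <= t ->
  cycle_dist a b = distn (offset n k a) (offset n k b).
Proof.
rewrite /offset /cycle_dist /distn => ?; have := ltn_ord a; have := ltn_ord b; have := ltn_ord k.
by case: (leqP k a); case: (leqP k b); lia.
Qed.

Lemma sum_windows t (j : 'I_n) : t < n -> \sum_(k < n) (offset n k j <= t) = t.+1.
Proof.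
move=> t_lt_n.
have offset_ord (k : 'I_n) : offset n k j < n by apply: offset_lt.
have offset_bij : injective (fun k : 'I_n => Ordinal (offset_ord k)).
  move=> k1 k2 /(congr1 val) /= eq12; apply: ord_inj.
  by rewrite -(offsetK (ltn_ord k1) (ltn_ord j)) eq12 offsetK.
rewrite (reindex_inj offset_bij) /=.
under eq_bigr => k _ do rewrite offsetK //.
rewrite -(big_mkord xpredT (fun k => k <= t : nat)) (big_cat_nat _ (n := t.+1)) //=.
rewrite (eq_big_nat _ _ (F2 := fun _ => 1)) => [|i /andP[_ ti]]; last by rewrite -ltnS ti.
rewrite [X in _ + X](eq_big_nat _ _ (F2 := fun _ => 0)) => [|i /andP[ti _]]; last first.
  by rewrite leqNgt ti.
by rewrite !sum_nat_const_nat; lia.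
Qed.

Lemma window_double_count (T : finType) (A : {set T}) (col : T -> 'I_n) t c : t < n ->
  (forall k : 'I_n, #|[set x in A | offset n k (col x) <= t]| <= c) -> t.+1 * #|A| <= c * n.
Proof.
move=> t_lt_n window_le.
have card_sum (P : pred T) : #|[set x in A | P x]| = \sum_(x in A) P x.
  rewrite -sum1_card big_mkcond [RHS]big_mkcond; apply: eq_bigr => x _.
  by rewrite !inE; case: (x \in A); case: (P x).
apply: (@leq_trans (\sum_(k < n) #|[set x in A | offset n k (col x) <= t]|)).
  under eq_bigr => k _ do rewrite card_sum.
  rewrite exchange_big /=.
  rewrite (eq_bigr (fun _ => t.+1)) => [|x _]; last exact: sum_windows.
  by rewrite sum_nat_const mulnC.
by rewrite -[n in c * n]card_ord mulnC -sum_nat_const leq_sum.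
Qed.

End Offset.

(* In the coordinates x1 + x2 and x1 + (t - x2) the L∞ distance becomes an L1
   distance. *)
Lemma double_maxn_distn t a1 b1 a2 b2 : a2 <= t -> b2 <= t ->
  2 * maxn (distn a1 b1) (distn a2 b2) =
  distn (a1 + a2) (b1 + b2) + distn (a1 + (t - a2)) (b1 + (t - b2)).
Proof. rewrite /distn; lia. Qed.

Lemma maxn_distn_between2 t a1 b1 c1 a2 b2 c2 : a2 <= t -> b2 <= t -> c2 <= t ->
  between (a1 + a2) (b1 + b2) (c1 + c2) ->
  between (a1 + (t - a2)) (b1 + (t - b2)) (c1 + (t - c2)) ->
  maxn (distn a1 b1) (distn a2 b2) + maxn (distn b1 c1) (distn b2 c2) =
  maxn (distn a1 c1) (distn a2 c2).
Proof.
move=> a2t b2t c2t /distn_between uabc /distn_between vabc.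
have := double_maxn_distn a1 b1 a2t b2t; have := double_maxn_distn b1 c1 b2t c2t.
have := double_maxn_distn a1 c1 a2t c2t; lia.
Qed.

Section StrongPathCycle.
Variables r n t : nat.
Hypotheses (t_lt_n : t < n) (t_half : 2 * t <= n).

Let E := strong_rel (@path_rel r) (@cycle_rel n).
Let d := strong_dist (fun i j : 'I_r => distn i j) (@cycle_dist n).

Let d_metric : graph_metric E d.
Proof. exact: strong_graph_metric (path_graph_metric r) (cycle_graph_metric n). Qed.

Let d_window (k : 'I_n) (x y : 'I_r * 'I_n) : offset n k x.2 <= t -> offset n k y.2 <= t ->
  d x y = maxn (distn x.1 y.1) (distn (offset n k x.2) (offset n k y.2)).
Proof. by move=> xk yk; rewrite /d /strong_dist (cycle_dist_offset t_half xk yk). Qed.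

Lemma gp_window_card_le4 (S : {set 'I_r * 'I_n}) (k : 'I_n) : gp_set E S ->
  #|[set x in S | offset n k x.2 <= t]| <= 4.
Proof.
move=> /(gp_setP d_metric) d_strict.
apply: (card_between_free2 (u := fun x : 'I_r * 'I_n => x.1 + offset n k x.2)
                           (v := fun x : 'I_r * 'I_n => x.1 + (t - offset n k x.2))).
move=> a b c; rewrite !inE => /andP[aS ak] /andP[bS bk] /andP[cS ck] ab bc ac.
apply/negP => /andP[uabc vabc]; have := d_strict a b c aS bS cS ab bc ac.
rewrite (d_window ak bk) (d_window bk ck) (d_window ak ck).
by rewrite (maxn_distn_between2 ak bk ck uabc vabc) ltnn.
Qed.

Lemma gp_row_window_card_le2 (S : {set 'I_r * 'I_n}) (i : 'I_r) (k : 'I_n) : gp_set E S ->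
  #|[set x in S | (x.1 == i) && (offset n k x.2 <= t)]| <= 2.
Proof.
move=> /(gp_setP d_metric) d_strict.
apply: (card_between_free1 (u := fun x : 'I_r * 'I_n => offset n k x.2)).
  move=> [x1 x2] [y1 y2]; rewrite !inE /= => /and3P[_ /eqP-> _] /and3P[_ /eqP-> _] xy.
  by congr pair; apply/ord_inj/(offset_inj (ltn_ord k)).
move=> a b c; rewrite !inE => /and3P[aS /eqP ai ak] /and3P[bS /eqP bi bk] /and3P[cS /eqP ci ck].
move=> ab bc ac; apply/negP => /distn_between abc; have := d_strict a b c aS bS cS ab bc ac.
rewrite (d_window ak bk) (d_window bk ck) (d_window ak ck) ai bi ci.
by move: abc; rewrite /distn; lia.
Qed.

Lemma gp_card_window_bound (S : {set 'I_r * 'I_n}) : gp_set E S -> t.+1 * #|S| <= 4 * n.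
Proof. by move=> gpS; apply: window_double_count t_lt_n _ => k; apply: gp_window_card_le4. Qed.

Lemma gp_row_card_window_bound (S : {set 'I_r * 'I_n}) (i : 'I_r) : gp_set E S ->
  t.+1 * #|[set x in S | x.1 == i]| <= 2 * n.
Proof.
move=> gpS; apply: (window_double_count (col := snd)) t_lt_n _ => k.
apply: leq_trans (gp_row_window_card_le2 i k gpS); apply: subset_leq_card.
by apply/subsetP => x; rewrite !inE andbA.
Qed.

End StrongPathCycle.

Lemma pbP (P : Prop) : reflect P (pb P).
Proof. by rewrite /pb; case: excluded_middle_informative => HP; constructor. Qed.

Lemma card_leq_gp (T : finType) (e : rel T) (S : {set T}) : gp_set e S -> #|S| <= gp e.
Proof. by move=> /pbP gpS; apply: leq_bigmax_cond. Qed.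

Lemma gp_leqP (T : finType) (e : rel T) m :
  reflect (forall S : {set T}, gp_set e S -> #|S| <= m) (gp e <= m).
Proof.
apply: (iffP (bigmax_leqP _ _ _)) => le_m S; last by move=> /pbP; apply: le_m.
by move=> gpS; apply: le_m; apply/pbP.
Qed.

Lemma card_sum_rows (R C : finType) (S : {set R * C}) :
  #|S| = \sum_(i : R) #|[set x in S | x.1 == i]|.
Proof.
rewrite -sum1_card (partition_big fst xpredT) //=; apply: eq_bigr => i _.
by rewrite -sum1_card; apply: eq_bigl => x; rewrite !inE.
Qed.

Section PathOddCycle.
Variables r t : nat.
Hypothesis t_gt0 : 0 < t.

Let n := 2 * t + 1.
Let E := strong_rel (@path_rel r) (@cycle_rel n).
Let d := strong_dist (fun i j : 'I_r => distn i j) (@cycle_dist n).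

Let t_lt_n : t < n. Proof. by rewrite /n; lia. Qed.
Let t_half : 2 * t <= n. Proof. by rewrite /n; lia. Qed.

Lemma gp_card_le7 (S : {set 'I_r * 'I_n}) : gp_set E S -> #|S| <= 7.
Proof. by move=> /(gp_card_window_bound t_lt_n t_half); rewrite /n; nia. Qed.

Lemma gp_card_le6_t_le2 (S : {set 'I_r * 'I_n}) : t <= 2 -> gp_set E S -> #|S| <= 6.
Proof. by move=> t_le2 /(gp_card_window_bound t_lt_n t_half); rewrite /n; nia. Qed.

Lemma gp_card_le3r (S : {set 'I_r * 'I_n}) : gp_set E S -> #|S| <= 3 * r.
Proof.
move=> gpS; rewrite card_sum_rows -[r in 3 * r]card_ord mulnC -sum_nat_const.
apply: leq_sum => i _; have := gp_row_card_window_bound t_lt_n t_half i gpS.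
by rewrite /n; move: #|_| => m; nia.
Qed.

Hypothesis r_ge2 : 2 <= r.

Definition six_col (q : 'I_3) := if q == 0 :> nat then 0 else if q == 1 :> nat then t else t.+1.

Lemma six_col_lt q : six_col q < n.
Proof. by rewrite /six_col /n; repeat case: ifP; lia. Qed.

Definition six_point (p : 'I_2 * 'I_3) : 'I_r * 'I_n :=
  (widen_ord r_ge2 p.1, Ordinal (six_col_lt p.2)).

Lemma six_point_inj : injective six_point.
Proof.
move=> [p1 p2] [q1 q2] [pq1 pq2]; congr pair; apply: ord_inj; first exact: pq1.
move: pq2; rewrite /six_col; have := ltn_ord p2; have := ltn_ord q2.
by repeat case: ifP; lia.
Qed.

Lemma six_point_dist p q : p != q ->
  d (six_point p) (six_point q) = if (p.2 == 0 :> nat) == (q.2 == 0 :> nat) then 1 else t.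
Proof.
move: p q => [p1 p2] [q1 q2] pq.
have : (p1 != q1 :> nat) || (p2 != q2 :> nat).
  by apply: contraR pq => /norP[/negPn/eqP/ord_inj-> /negPn/eqP/ord_inj->].
case: (eqVneq (nat_of_ord p2) 0) => p20; case: (eqVneq (nat_of_ord q2) 0) => q20 /=;
  rewrite /d /strong_dist /cycle_dist /distn /n /= /six_col;
  have := ltn_ord p1; have := ltn_ord q1; have := ltn_ord p2; have := ltn_ord q2;
  by repeat case: ifP; lia.
Qed.

Lemma six_point_gp : gp_set E (six_point @: setT).
Proof.
apply/(gp_setP (strong_graph_metric (path_graph_metric r) (cycle_graph_metric n))); rewrite -/d.
move=> _ _ _ /imsetP[a _ ->] /imsetP[b _ ->] /imsetP[c _ ->] ab bc ac.
have neq p q : six_point p != six_point q -> p != q by apply: contra_neq => ->.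
rewrite !six_point_dist; try by apply: neq.
by case: (a.2 == 0 :> nat); case: (b.2 == 0 :> nat); case: (c.2 == 0 :> nat) => /=; lia.
Qed.

Lemma gp_ge6 : 6 <= gp E.
Proof.
apply: leq_trans (card_leq_gp six_point_gp).
by rewrite card_imset ?cardsT ?card_prod ?card_ord //; apply: six_point_inj.
Qed.

End PathOddCycle.

Theorem theorem4p6 (r t : nat) (hr : 2 <= r) (ht : 1 <= t) :
  let g := gp (strong_rel (@path_rel r) (@cycle_rel (2 * t + 1))) in
  (6 <= g <= 7) /\ ((t == 1) || (t == 2) || (r == 2) -> g = 6).
Proof.
move=> g.
have g_ge6 : 6 <= g := gp_ge6 ht hr.
have g_le7 : g <= 7 by apply/gp_leqP => S; apply: gp_card_le7.
split; first by rewrite g_ge6 g_le7.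
move=> small; apply/eqP; rewrite eqn_leq g_ge6 andbT; apply/gp_leqP => S gpS.
case/orP: small => [t12 | /eqP r2]; last by subst r; move: gpS => /(gp_card_le3r ht).
by apply: (gp_card_le6_t_le2 ht) gpS; case/orP: t12 => /eqP->.
Qed.
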